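(* Let $m,n\ge1$ be integers. If $(x,y,z)\in\mathbb{C}^3$ satisfies $v(x,y,z)=-2$ and $nS_m(z)+(n+1)S_{m-1}(z)=0$, then $$z=(n^2+n)(x+y)^2+xy+2.$$ Hence the set of such points contains no point of the form $(2,2,z)$ with $z\notin\mathbb{R}$.
   Context: $S_k(q)$ are the Chebyshev polynomials defined for all integers $k$ by $S_0=1$, $S_1=q$, $S_{k+1}=qS_k-S_{k-1}$. Here $v(x,y,z)=\big(xS_m(z)-yS_{m-1}(z)\big)\big(yS_m(z)-xS_{m-1}(z)\big)-z\big(S_m^2(z)+S_{m-1}^2(z)\big)+4S_m(z)S_{m-1}(z)$. *)

From mathcomp Require Import all_boot all_order all_algebra.
From mathcomp Require Export complex.
From mathcomp Require Export Rstruct.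
Set Implicit Arguments. Unset Strict Implicit. Unset Printing Implicit Defensive.
Import Order.TTheory GRing.Theory Num.Theory.
Local Open Scope ring_scope.

Notation C := (Rdefinitions.R[i]).

(* Chebyshev polynomials S_k(q) for k : nat: S_0 = 1, S_1 = q,
   S_{k+2} = q S_{k+1} - S_k.  Only indices m, m-1 with m >= 1 are needed. *)
Fixpoint Sch {K : ringType} (k : nat) (q : K) : K :=
  match k with
  | 0 => 1
  | 1 => q
  | (k'.+1 as k1).+1 => q * Sch k1 q - Sch k' q
  end.

Definition vfun {K : comRingType} (m : nat) (x y z : K) : K :=
  (x * Sch m z - y * Sch m.-1 z) * (y * Sch m z - x * Sch m.-1 z)
  - z * (Sch m z ^+ 2 + Sch m.-1 z ^+ 2) + 4 * Sch m z * Sch m.-1 z.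

From mathcomp Require Import all_boot all_order all_algebra.
From mathcomp Require Import ring.
Import Order.TTheory GRing.Theory Num.Theory.
Local Open Scope ring_scope.

(* With a = S_m(z) and b = S_{m-1}(z), the Cassini identity a^2 - z a b + b^2 = 1
   lets one replace the constant -2 in v(x,y,z) = -2 by -2 (a^2 - z a b + b^2),
   turning the equation into a quadratic form in (a, b) that vanishes.  The
   relation n a + (n+1) b = 0 fixes the ratio a : b, and b <> 0 because a = b = 0
   contradicts Cassini; dividing by b^2 leaves exactly
   z = (n^2+n)(x+y)^2 + xy + 2.  At x = y = 2 this is a natural number. *)

Lemma Sch_cassini {K : comNzRingType} (k : nat) (z : K) :
  Sch k.+1 z ^+ 2 - z * Sch k.+1 z * Sch k z + Sch k z ^+ 2 = 1.
Proof.
elim: k => [|k IHk]; first by rewrite /=; ring.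
have -> : Sch k.+2 z = z * Sch k.+1 z - Sch k z by [].
by rewrite -IHk; ring.
Qed.

Section ChebyshevPair.

Context {K : comNzRingType} (x y z : K) {a b : K}.

Lemma cassini_homogenize :
  a ^+ 2 - z * a * b + b ^+ 2 = 1 ->
  (x * a - y * b) * (y * a - x * b) - z * (a ^+ 2 + b ^+ 2) + 4 * a * b = -2 ->
  (x * y - z + 2) * (a ^+ 2 + b ^+ 2) + (4 - x ^+ 2 - y ^+ 2 - 2 * z) * a * b = 0.
Proof.
move=> hc hv.
have -> : (x * y - z + 2) * (a ^+ 2 + b ^+ 2) + (4 - x ^+ 2 - y ^+ 2 - 2 * z) * a * b
    = ((x * a - y * b) * (y * a - x * b) - z * (a ^+ 2 + b ^+ 2) + 4 * a * b + 2)
      + 2 * ((a ^+ 2 - z * a * b + b ^+ 2) - 1) by ring.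
by rewrite hv hc; ring.
Qed.

Lemma homogenized_ratio (n : nat) :
  n%:R * a + n.+1%:R * b = 0 ->
  n%:R ^+ 2 * ((x * y - z + 2) * (a ^+ 2 + b ^+ 2)
               + (4 - x ^+ 2 - y ^+ 2 - 2 * z) * a * b)
  = b ^+ 2 * ((n ^ 2 + n)%:R * (x + y) ^+ 2 + x * y + 2 - z).
Proof.
move=> hlin.
have hna : n%:R * a = - (n.+1%:R * b) by apply/eqP; rewrite -subr_eq0 opprK hlin.
have -> : n%:R ^+ 2 * ((x * y - z + 2) * (a ^+ 2 + b ^+ 2)
                       + (4 - x ^+ 2 - y ^+ 2 - 2 * z) * a * b)
    = (x * y - z + 2) * ((n%:R * a) ^+ 2 + n%:R ^+ 2 * b ^+ 2)
      + (4 - x ^+ 2 - y ^+ 2 - 2 * z) * n%:R * (n%:R * a) * b by ring.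
by rewrite hna natrD natrX; ring.
Qed.

End ChebyshevPair.

Lemma cassini_ratio_neq0 {R : idomainType} {n : nat} {z a b : R} :
  n%:R != 0 :> R -> a ^+ 2 - z * a * b + b ^+ 2 = 1 ->
  n%:R * a + n.+1%:R * b = 0 -> b != 0.
Proof.
move=> hn hc hlin; apply/eqP => b0.
have a0 : a = 0.
  by apply/eqP; move: hlin; rewrite b0 mulr0 addr0 => /eqP; rewrite mulf_eq0 (negbTE hn).
by move/eqP: hc; rewrite a0 b0 expr0n /= !(mulr0, mul0r, subrr, addr0) eq_sym oner_eq0.
Qed.

Lemma vfun_ratio_solve {R : idomainType} {m n : nat} (x y z : R) :
  (0 < m)%N -> n%:R != 0 :> R ->
  vfun m x y z = -2 -> n%:R * Sch m z + n.+1%:R * Sch m.-1 z = 0 ->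
  z = (n ^ 2 + n)%:R * (x + y) ^+ 2 + x * y + 2.
Proof.
case: m => [//|k] _ hn hv.
rewrite [k.+1.-1]/= => hlin.
have hc := Sch_cassini k z.
have hQ := cassini_homogenize x y z hc hv.
have := homogenized_ratio x y z n hlin.
rewrite hQ mulr0 => /esym/eqP.
rewrite mulf_eq0 expf_eq0 /= (negbTE (cassini_ratio_neq0 hn hc hlin)).
by rewrite subr_eq0 => /eqP.
Qed.

Theorem lemma4p14 (m n : nat) : (1 <= m)%N -> (1 <= n)%N ->
  (forall x y z : C,
     vfun m x y z = -2 ->
     n%:R * Sch m z + (n.+1)%:R * Sch m.-1 z = 0 ->
     z = (n ^ 2 + n)%:R * (x + y) ^+ 2 + x * y + 2)
  /\
  (forall z : C, z \notin Num.real ->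
     ~ (vfun m 2 2 z = -2 /\ n%:R * Sch m z + (n.+1)%:R * Sch m.-1 z = 0)).
Proof.
move=> hm hn; have hnC : n%:R != 0 :> C by rewrite pnatr_eq0 -lt0n.
have solve (x y z : C) := vfun_ratio_solve x y z hm hnC.
split=> [|z + [hv hlin]]; first exact: solve.
rewrite (solve _ _ _ hv hlin).
have -> : (n ^ 2 + n)%:R * (2 + 2) ^+ 2 + 2 * 2 + 2 = ((n ^ 2 + n) * 16 + 6)%N%:R :> C.
  by rewrite natrD natrM; ring.
by rewrite realn.
Qed.
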